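(* For every integer $d\ge2$, $$I_{1-\frac1d}\Big(\frac{d+1}{2},\frac12\Big)\ge\frac{1}{8\sqrt{6\pi}},$$ where $I_x(a,b)=B_x(a,b)/B(a,b)$ is the regularized incomplete beta function, $B_x(a,b)=\int_0^xt^{a-1}(1-t)^{b-1}dt$ and $B(a,b)=B_1(a,b)$. *)

From Stdlib Require Import Reals.
Open Scope R_scope.

(* Integrand of the beta function: t^(a-1) (1-t)^(b-1) on the open interval
   (0,1); set to 0 elsewhere (endpoints do not affect Riemann integrals). *)
Definition beta_integrand (a b t : R) : R :=
  if Rlt_dec 0 t then
    if Rlt_dec t 1 then Rpower t (a - 1) * Rpower (1 - t) (b - 1) else 0
  else 0.

Definition RInt_val (f : R -> R) (lo hi v : R) : Prop :=
  exists pr : Riemann_integrable f lo hi, RiemannInt pr = v.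

Definition incomplete_beta (a b x v : R) : Prop :=
  RInt_val (beta_integrand a b) 0 x v.

Definition complete_beta (a b B : R) : Prop :=
  forall eps, 0 < eps -> exists delta, 0 < delta /\
    forall y, 1 - delta < y < 1 ->
      exists v, incomplete_beta a b y v /\ Rabs (v - B) < eps.

(* For t in (0,1) the integrand is sqrt t ^ (d-1) / sqrt (1-t), and sqrt t ^ (d-1) lies between
   integer powers of t with exponents about (d-1)/2.  On [0, 1 - 1/d] the integrand is at most
   sqrt d * t ^ m, and on [1 - 1/d, 1) at most 1 / sqrt (1-t); each piece contributes at most
   2 / sqrt d, so the nondecreasing partial integrals are bounded by 4 / sqrt d and B is their
   supremum.  On [1 - 2/d, 1 - 1/d] Bernoulli's inequality bounds the integrand below by the
   linear function sqrt (d/2) * (1 - d(1-t)/2), whose integral is 1 / (4 sqrt (2d)).  Hence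
   B_x / B >= 1 / (16 sqrt 2), which beats 1 / (8 sqrt (6 pi)) because 6 pi >= 8. *)

From Stdlib Require Import Reals Lra Lia Psatz Classical.
From Coquelicot Require Import Coquelicot.
Open Scope R_scope.

Ltac field_pos := field; repeat split; apply Rgt_not_eq; lra.

Lemma pow_le_pow_of_le_1 (x : R) (k n : nat) :
  0 <= x <= 1 -> (k <= n)%nat -> x ^ n <= x ^ k.
Proof.
intros Hx Hkn. replace n with (k + (n - k))%nat by lia. rewrite pow_add.
assert (0 <= x ^ k) by (apply pow_le; lra).
assert (x ^ (n - k) <= 1) by (rewrite <- (pow1 (n - k)); apply pow_incr; lra).
nra.
Qed.

Lemma Bernoulli_sub (u : R) (M : nat) : 0 <= u <= 1 -> 1 - INR M * u <= (1 - u) ^ M.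
Proof.
intros Hu. induction M as [|M IH]; [simpl; lra|].
rewrite S_INR. simpl.
assert (0 <= (1 - u) ^ M) by (apply pow_le; lra).
assert (0 <= INR M) by apply pos_INR.
nra.
Qed.

Lemma sqrt_unit_interval (t : R) : 0 <= t <= 1 -> 0 <= sqrt t <= 1.
Proof. intros Ht. split; [apply sqrt_pos|]. rewrite <- sqrt_1. apply sqrt_le_1_alt. lra. Qed.

Lemma sqrt_pow_le_pow (t : R) (n m : nat) :
  0 <= t <= 1 -> (2 * m <= n)%nat -> sqrt t ^ n <= t ^ m.
Proof.
intros Ht Hmn. rewrite <- (pow2_sqrt t) at 2 by lra. rewrite <- pow_mult.
apply pow_le_pow_of_le_1; [apply sqrt_unit_interval|]; lia || lra.
Qed.

Lemma pow_le_sqrt_pow (t : R) (n m : nat) :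
  0 <= t <= 1 -> (n <= 2 * m)%nat -> t ^ m <= sqrt t ^ n.
Proof.
intros Ht Hnm. rewrite <- (pow2_sqrt t) at 1 by lra. rewrite <- pow_mult.
apply pow_le_pow_of_le_1; [apply sqrt_unit_interval|]; lia || lra.
Qed.

Lemma div2_bounds (n : nat) : (2 * Nat.div2 n <= n <= S (2 * Nat.div2 n))%nat.
Proof. pose proof (Nat.div2_odd n). destruct (Nat.odd n); simpl in *; lia. Qed.

Lemma div_le_div_of_bounds (L x y U : R) :
  0 < L -> L <= x -> x <= y -> y <= U -> L / U <= x / y.
Proof.
intros HL Hx Hxy HyU. unfold Rdiv.
apply Rmult_le_compat; try lra.
- left; apply Rinv_0_lt_compat; lra.
- apply Rinv_le_contravar; lra.
Qed.

Lemma nondecreasing_bounded_left_limit (F : R -> R) (a b M : R) :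
  a < b ->
  (forall x y, a <= x <= y -> y < b -> F x <= F y) ->
  (forall y, a <= y < b -> F y <= M) ->
  exists L, L <= M /\ (forall y, a <= y < b -> F y <= L) /\
    forall eps, 0 < eps -> exists delta, 0 < delta <= b - a /\
      forall y, b - delta < y < b -> Rabs (F y - L) < eps.
Proof.
intros Hab Hmono Hbound.
set (E := fun v => exists y, a <= y < b /\ v = F y).
assert (HE : E (F a)) by (exists a; split; [lra | reflexivity]).
assert (HEM : is_upper_bound E M) by (intros v (y & Hy & ->); auto).
destruct (completeness E (ex_intro _ M HEM) (ex_intro _ _ HE)) as [L [HLub HLleast]].
assert (HFL : forall y, a <= y < b -> F y <= L) by (intros y Hy; apply HLub; exists y; auto).
exists L. split; [apply HLleast, HEM|]. split; [exact HFL|].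
intros eps Heps.
destruct (classic (exists y0, a <= y0 < b /\ L - eps < F y0)) as [(y0 & Hy0 & Hclose)|Hfar].
- exists (b - y0). split; [lra|]. intros y Hy.
  assert (F y0 <= F y) by (apply Hmono; lra).
  assert (F y <= L) by (apply HFL; lra).
  apply Rabs_def1; lra.
- exfalso. assert (L <= L - eps); [|lra].
  apply HLleast. intros v (y & Hy & ->).
  apply Rnot_lt_le. intros Hlt. apply Hfar. exists y; auto.
Qed.

Lemma inv_8_sqrt_6PI_le : 1 / (8 * sqrt (6 * PI)) <= 1 / (16 * sqrt 2).
Proof.
assert (Hpi : 3 < PI) by (pose proof PI2_3_2; lra).
assert (Hs2 : 0 < sqrt 2) by (apply sqrt_lt_R0; lra).
assert (Hsqrt8 : sqrt 8 = 2 * sqrt 2).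
{ replace 8 with (2 * 2 * 2) by ring. rewrite sqrt_mult_alt, sqrt_square; lra. }
assert (sqrt 8 <= sqrt (6 * PI)) by (apply sqrt_le_1_alt; lra).
unfold Rdiv. rewrite !Rmult_1_l. apply Rinv_le_contravar; lra.
Qed.

Definition beta_half (n : nat) (t : R) : R := sqrt t ^ n / sqrt (1 - t).

Lemma beta_integrand_eq_beta_half (n : nat) (t : R) :
  0 < t < 1 -> beta_integrand ((INR n + 2) / 2) (1 / 2) t = beta_half n t.
Proof.
intros Ht. unfold beta_integrand, beta_half.
destruct (Rlt_dec 0 t); [|lra]. destruct (Rlt_dec t 1); [|lra].
replace ((INR n + 2) / 2 - 1) with (/ 2 * INR n) by field.
replace (1 / 2 - 1) with (- / 2) by field.
rewrite <- Rpower_mult, Rpower_sqrt, Rpower_pow by (try apply sqrt_lt_R0; lra).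
rewrite Rpower_Ropp, Rpower_sqrt by lra. reflexivity.
Qed.

Lemma continuous_beta_half (n : nat) (t : R) : t < 1 -> continuous (beta_half n) t.
Proof.
intros Ht. unfold beta_half, Rdiv.
apply (continuous_mult (fun t => sqrt t ^ n) (fun t => / sqrt (1 - t))).
- apply (continuous_comp sqrt (fun u => u ^ n)); [apply continuous_sqrt|].
  apply (ex_derive_continuous (fun u => u ^ n)). auto_derive. auto.
- apply (ex_derive_continuous (fun t => / sqrt (1 - t))). auto_derive.
  split; [lra | split; [apply Rgt_not_eq, sqrt_lt_R0; lra | auto]].
Qed.

Lemma beta_half_ge0 (n : nat) (t : R) : t < 1 -> 0 <= beta_half n t.
Proof.
intros Ht. unfold beta_half, Rdiv. apply Rmult_le_pos.
- apply pow_le, sqrt_pos.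
- left; apply Rinv_0_lt_compat, sqrt_lt_R0; lra.
Qed.

Lemma ex_RInt_beta_half (n : nat) (a b : R) : a <= b < 1 -> ex_RInt (beta_half n) a b.
Proof.
intros Hab. apply (ex_RInt_continuous (V := R_CompleteNormedModule)). intros t Ht.
rewrite Rmin_left, Rmax_right in Ht by lra.
apply continuous_beta_half; lra.
Qed.

Lemma incomplete_beta_RInt (n : nat) (y : R) :
  0 <= y < 1 -> incomplete_beta ((INR n + 2) / 2) (1 / 2) y (RInt (beta_half n) 0 y).
Proof.
intros Hy.
assert (Heq : forall t, Rmin 0 y < t < Rmax 0 y ->
          beta_half n t = beta_integrand ((INR n + 2) / 2) (1 / 2) t).
{ intros t Ht. rewrite Rmin_left, Rmax_right in Ht by lra.
  symmetry; apply beta_integrand_eq_beta_half; lra. }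
assert (Hex : ex_RInt (beta_integrand ((INR n + 2) / 2) (1 / 2)) 0 y).
{ apply ex_RInt_ext with (beta_half n); [exact Heq | apply ex_RInt_beta_half; lra]. }
exists (ex_RInt_Reals_0 _ _ _ Hex).
rewrite <- RInt_Reals. apply RInt_ext. intros t Ht. symmetry; apply Heq, Ht.
Qed.

Lemma RInt_beta_half_nondecreasing (n : nat) (x y : R) :
  0 <= x <= y -> y < 1 -> RInt (beta_half n) 0 x <= RInt (beta_half n) 0 y.
Proof.
intros Hxy Hy.
rewrite <- (RInt_Chasles (beta_half n) 0 x y) by (apply ex_RInt_beta_half; lra).
assert (0 <= RInt (beta_half n) x y).
{ apply RInt_ge_0; [lra | apply ex_RInt_beta_half; lra |].
  intros t Ht; apply beta_half_ge0; lra. }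
unfold plus; simpl. lra.
Qed.

Section BetaHalfBounds.

Variable d : nat.
Hypothesis Hd : (2 <= d)%nat.

Let D := INR d.

Lemma INR_d_ge_2 : 2 <= D.
Proof. apply (le_INR 2); lia. Qed.

Lemma sqrt_D_pos : 0 < sqrt D.
Proof. apply sqrt_lt_R0. pose proof INR_d_ge_2; lra. Qed.

Lemma inv_D_bounds : 0 < 1 / D <= 1 / 2.
Proof.
pose proof INR_d_ge_2. split; [apply Rdiv_lt_0_compat; lra|].
unfold Rdiv. rewrite !Rmult_1_l. apply Rinv_le_contravar; lra.
Qed.

Lemma beta_half_le_pow (t : R) :
  0 <= t <= 1 - 1 / D -> beta_half (d - 1) t <= sqrt D * t ^ Nat.div2 (d - 1).
Proof.
intros Ht. pose proof inv_D_bounds. pose proof INR_d_ge_2.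
assert (Hnum : sqrt t ^ (d - 1) <= t ^ Nat.div2 (d - 1)).
{ apply sqrt_pow_le_pow; [lra | apply div2_bounds]. }
assert (0 <= sqrt t ^ (d - 1)) by (apply pow_le, sqrt_pos).
assert (Hden : 1 <= sqrt (1 - t) * sqrt D).
{ rewrite <- sqrt_mult_alt by lra. rewrite <- sqrt_1 at 1. apply sqrt_le_1_alt.
  assert (1 / D * D = 1) by field_pos. nra. }
assert (0 < sqrt (1 - t)) by (apply sqrt_lt_R0; lra).
assert (0 <= t ^ Nat.div2 (d - 1)) by (apply pow_le; lra).
unfold beta_half. apply Rmult_le_reg_r with (sqrt (1 - t)); [lra|].
unfold Rdiv. rewrite Rmult_assoc, Rinv_l, Rmult_1_r by lra. nra.
Qed.

Lemma RInt_beta_half_head (z : R) :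
  0 <= z <= 1 - 1 / D -> RInt (beta_half (d - 1)) 0 z <= 2 / sqrt D.
Proof.
intros Hz. pose proof INR_d_ge_2. pose proof inv_D_bounds. pose proof sqrt_D_pos.
set (m := Nat.div2 (d - 1)).
assert (HD : D <= 2 * INR (S m)).
{ unfold D. replace 2 with (INR 2) by (simpl; lra). rewrite <- mult_INR. apply le_INR. pose proof (div2_bounds (d - 1)). fold m in H2. lia. }
pose proof (is_RInt_scal (fun t => t ^ m) 0 z (sqrt D) _ (is_RInt_pow 0 z m)) as Hint.
eapply Rle_trans.
{ apply (is_RInt_le _ _ 0 z _ _ ltac:(lra) (RInt_correct _ _ _ (ex_RInt_beta_half _ 0 z ltac:(lra))) Hint).
  intros t Ht. apply beta_half_le_pow. lra. }
change (scal (sqrt D) ?v) with (sqrt D * v).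
assert (Hzm : z ^ S m <= 1) by (rewrite <- (pow1 (S m)); apply pow_incr; lra).
assert (0 < INR (S m)) by apply lt_0_INR, Nat.lt_0_succ.
assert (Hss : sqrt D * sqrt D = D) by (apply sqrt_sqrt; lra).
rewrite pow_i, Rdiv_0_l, Rminus_0_r by lia.
apply Rle_trans with (sqrt D / INR (S m)).
- unfold Rdiv. rewrite <- Rmult_assoc. apply Rmult_le_compat_r; [left; apply Rinv_0_lt_compat; lra | nra].
- apply Rmult_le_reg_r with (INR (S m) * sqrt D); [nra|].
  replace (sqrt D / INR (S m) * (INR (S m) * sqrt D)) with (sqrt D * sqrt D) by field_pos.
  replace (2 / sqrt D * (INR (S m) * sqrt D)) with (2 * INR (S m)) by field_pos.
  lra.
Qed.

Lemma RInt_beta_half_tail (y : R) :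
  1 - 1 / D <= y < 1 -> RInt (beta_half (d - 1)) (1 - 1 / D) y <= 2 / sqrt D.
Proof.
intros Hy. pose proof INR_d_ge_2. pose proof inv_D_bounds. pose proof sqrt_D_pos.
assert (Hint : is_RInt (fun t => / sqrt (1 - t)) (1 - 1 / D) y
                 (minus (-2 * sqrt (1 - y)) (-2 * sqrt (1 - (1 - 1 / D))))).
{ apply (is_RInt_derive (fun t => -2 * sqrt (1 - t))); intros t Ht;
    rewrite Rmin_left, Rmax_right in Ht by lra.
  - assert (0 < sqrt (1 - t)) by (apply sqrt_lt_R0; lra).
    auto_derive; [lra|]. replace (1 + - t) with (1 - t) by ring. field_pos.
  - apply (ex_derive_continuous (fun t => / sqrt (1 - t))). auto_derive.
    split; [lra | split; [apply Rgt_not_eq, sqrt_lt_R0; lra | auto]]. }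
eapply Rle_trans.
{ apply (is_RInt_le _ _ (1 - 1 / D) y _ _ ltac:(lra)
           (RInt_correct _ _ _ (ex_RInt_beta_half _ (1 - 1 / D) y ltac:(lra))) Hint).
  intros t Ht. unfold beta_half, Rdiv.
  assert (sqrt t ^ (d - 1) <= 1).
  { rewrite <- (pow1 (d - 1)). apply pow_incr, sqrt_unit_interval. lra. }
  assert (0 < / sqrt (1 - t)) by (apply Rinv_0_lt_compat, sqrt_lt_R0; lra).
  nra. }
unfold minus, plus, opp; simpl.
assert (Hedge : sqrt (1 - (1 - 1 / D)) * sqrt D = 1).
{ rewrite <- sqrt_mult_alt by lra.
  replace ((1 - (1 - 1 / D)) * D) with 1 by field_pos.
  apply sqrt_1. }
assert (0 <= sqrt (1 - y)) by apply sqrt_pos.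
apply Rmult_le_reg_r with (sqrt D); [lra|].
replace (2 / sqrt D * sqrt D) with 2 by field_pos. nra.
Qed.

Lemma RInt_beta_half_upper (y : R) :
  0 <= y < 1 -> RInt (beta_half (d - 1)) 0 y <= 4 / sqrt D.
Proof.
intros Hy. pose proof inv_D_bounds.
set (z := Rmax y (1 - 1 / D)).
assert (Hz : 1 - 1 / D <= z < 1) by (split; [apply Rmax_r | apply Rmax_lub_lt; lra]).
eapply Rle_trans.
{ apply (RInt_beta_half_nondecreasing _ y z); [split; [lra | apply Rmax_l] | lra]. }
rewrite <- (RInt_Chasles (beta_half (d - 1)) 0 (1 - 1 / D) z) by (apply ex_RInt_beta_half; lra).
pose proof (RInt_beta_half_head (1 - 1 / D) ltac:(lra)).
pose proof (RInt_beta_half_tail z Hz).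
unfold plus; simpl. unfold Rdiv in *. lra.
Qed.

(* Bernoulli: sqrt t ^ (d-1) >= t ^ M >= 1 - M (1-t) >= 1 - D (1-t) / 2, where 2M <= d. *)
Lemma beta_half_ge_tent (t : R) :
  1 - 2 / D <= t < 1 -> sqrt D / sqrt 2 * (1 - D * (1 - t) / 2) <= beta_half (d - 1) t.
Proof.
intros Ht. pose proof INR_d_ge_2. pose proof sqrt_D_pos.
assert (H2D : 2 / D * D = 2) by field_pos.
assert (Ht0 : 0 <= t) by (assert (2 / D <= 1) by nra; lra).
set (M := Nat.div2 d).
assert (HM : 2 * INR M <= D /\ (d - 1 <= 2 * M)%nat).
{ pose proof (div2_bounds d). fold M in H1. split; [|lia].
  unfold D. replace 2 with (INR 2) by (simpl; lra). rewrite <- mult_INR. apply le_INR. lia. }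
assert (Hnum : 1 - D * (1 - t) / 2 <= sqrt t ^ (d - 1)).
{ apply Rle_trans with (t ^ M); [|apply pow_le_sqrt_pow; lra || lia].
  replace t with (1 - (1 - t)) at 2 by ring.
  eapply Rle_trans; [|apply Bernoulli_sub; lra].
  assert (0 <= 1 - t) by lra. nra. }
assert (Hlin : 0 <= 1 - D * (1 - t) / 2) by nra.
assert (Hden : sqrt D / sqrt 2 <= / sqrt (1 - t)).
{ assert (0 < sqrt (1 - t)) by (apply sqrt_lt_R0; lra).
  assert (0 < sqrt 2) by (apply sqrt_lt_R0; lra).
  assert (sqrt (1 - t) * sqrt D <= sqrt 2).
  { rewrite <- sqrt_mult_alt by lra. apply sqrt_le_1_alt. nra. }
  apply Rmult_le_reg_r with (sqrt (1 - t) * sqrt 2); [nra|].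
  replace (/ sqrt (1 - t) * (sqrt (1 - t) * sqrt 2)) with (sqrt 2) by field_pos.
  replace (sqrt D / sqrt 2 * (sqrt (1 - t) * sqrt 2)) with (sqrt (1 - t) * sqrt D) by field_pos.
  lra. }
assert (0 <= sqrt D / sqrt 2) by (apply Rdiv_le_0_compat; [lra | apply sqrt_lt_R0; lra]).
unfold beta_half, Rdiv at 2. nra.
Qed.

Lemma RInt_beta_half_lower :
  1 / (4 * sqrt 2 * sqrt D) <= RInt (beta_half (d - 1)) 0 (1 - 1 / D).
Proof.
pose proof INR_d_ge_2. pose proof inv_D_bounds. pose proof sqrt_D_pos.
assert (H2D : 2 / D = 2 * (1 / D)) by field_pos.
set (c := sqrt D / sqrt 2).
assert (Hint : is_RInt (fun t => c * (1 - D * (1 - t) / 2)) (1 - 2 / D) (1 - 1 / D) (c / (4 * D))).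
{ replace (c / (4 * D)) with
    (minus (c * ((1 - 1 / D) + D * (1 - (1 - 1 / D)) ^ 2 / 4))
           (c * ((1 - 2 / D) + D * (1 - (1 - 2 / D)) ^ 2 / 4)))
    by (unfold minus, plus, opp; simpl; field_pos).
  apply (is_RInt_derive (fun t => c * (t + D * (1 - t) ^ 2 / 4))); intros t _.
  - auto_derive; [auto | field].
  - apply (ex_derive_continuous (fun t => c * (1 - D * (1 - t) / 2))). auto_derive. auto. }
assert (Hcmp : c / (4 * D) <= RInt (beta_half (d - 1)) (1 - 2 / D) (1 - 1 / D)).
{ apply (is_RInt_le _ _ (1 - 2 / D) (1 - 1 / D) _ _ ltac:(lra) Hint
          (RInt_correct _ _ _ (ex_RInt_beta_half _ (1 - 2 / D) (1 - 1 / D) ltac:(lra)))).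
  intros t Ht. apply beta_half_ge_tent. lra. }
rewrite <- (RInt_Chasles (beta_half (d - 1)) 0 (1 - 2 / D) (1 - 1 / D))
  by (apply ex_RInt_beta_half; lra).
assert (0 <= RInt (beta_half (d - 1)) 0 (1 - 2 / D)).
{ apply RInt_ge_0; [lra | apply ex_RInt_beta_half; lra |].
  intros t Ht; apply beta_half_ge0; lra. }
assert (Hc : c / (4 * D) = 1 / (4 * sqrt 2 * sqrt D)).
{ assert (0 < sqrt 2) by (apply sqrt_lt_R0; lra).
  assert (HDD : sqrt D * sqrt D = D) by (apply sqrt_sqrt; lra).
  unfold c. replace (4 * D) with (4 * (sqrt D * sqrt D)) by (rewrite HDD; ring). field_pos. }
unfold plus; simpl. lra.
Qed.

End BetaHalfBounds.

Theorem mainTheorem7 : forall d : nat, (2 <= d)%nat ->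
  exists Bx B : R,
    incomplete_beta ((INR d + 1) / 2) (1 / 2) (1 - 1 / INR d) Bx /\
    complete_beta ((INR d + 1) / 2) (1 / 2) B /\
    Bx / B >= 1 / (8 * sqrt (6 * PI)).
Proof.
intros d Hd.
pose proof (inv_D_bounds d Hd). pose proof (sqrt_D_pos d Hd).
replace ((INR d + 1) / 2) with ((INR (d - 1) + 2) / 2) by (rewrite minus_INR by lia; simpl; field).
set (F := RInt (beta_half (d - 1)) 0).
destruct (nondecreasing_bounded_left_limit F 0 1 (4 / sqrt (INR d)))
  as (B & HBU & HFB & Hlim).
- lra.
- intros x y Hxy Hy. apply RInt_beta_half_nondecreasing; lra.
- intros y Hy. apply RInt_beta_half_upper; auto.
- exists (F (1 - 1 / INR d)), B. split; [|split].
  + apply incomplete_beta_RInt. lra.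
  + intros eps Heps. destruct (Hlim eps Heps) as (delta & Hdelta & Hclose).
    exists delta. split; [lra|]. intros y Hy.
    exists (F y). split; [apply incomplete_beta_RInt; lra | auto].
  + pose proof (RInt_beta_half_lower d Hd) as HL. fold F in HL.
    assert (Hs2 : 0 < sqrt 2) by (apply sqrt_lt_R0; lra).
    assert (Hratio : 1 / (4 * sqrt 2 * sqrt (INR d)) / (4 / sqrt (INR d)) <= F (1 - 1 / INR d) / B).
    { apply div_le_div_of_bounds; auto; [|apply HFB; lra].
      apply Rdiv_lt_0_compat; [lra|]. nra. }
    pose proof inv_8_sqrt_6PI_le.
    replace (1 / (4 * sqrt 2 * sqrt (INR d)) / (4 / sqrt (INR d))) with (1 / (16 * sqrt 2))
      in Hratio by field_pos.
    lra.
Qed.
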